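(* Let $\alpha$ be a countable ordinal and let $(x_n)_n$ be a bounded sequence in $X_\alpha$. Suppose there are $\varepsilon>0$, an ordinal $\beta<\alpha$ and a block sequence $(s_n)_n$ of elements of $\mathcal S_\beta$ (i.e. $\max s_n<\min s_{n+1}$) such that $\sum_{k\in s_n}|(x_n)_k|\ge\varepsilon$ for every $n$. Then $\{x_n\}_n$ is not a Banach-Saks set.
   Context: A subset $A$ of a Banach space is a Banach-Saks set if every sequence in $A$ has a subsequence whose Ces\`aro means converge in norm. For a family $\mathcal F$ of finite subsets of $\mathbb N$, $X_{\mathcal F}$ is the completion of $c_{00}(\mathbb N)$ under $\|x\|_{\mathcal F}=\max\{\|x\|_\infty,\sup_{s\in\mathcal F}\sum_{n\in s}|(x)_n|\}$, $(x)_k$ denoting the $k$-th coordinate. The Schreier family is $\mathcal S=\{s\subseteq\mathbb N: \#s\le\min s\}$; $\mathcal F\otimes\mathcal G=\{s_0\cup\dots\cup s_n: s_0<\dots<s_n \text{ in }\mathcal F,\ \{\min s_i\}_{i\le n}\in\mathcal G\}$ with $s<t$ meaning $\max s<\min t$. For each countable limit ordinal $\alpha$ a strictly increasing sequence $(\beta_n^{(\alpha)})_n$ with supremum $\alpha$ is fixed; $\mathcal S_0=\{s:\#s\le1\}$, $\mathcal S_{\alpha+1}=\mathcal S_\alpha\otimes\mathcal S$, and for limit $\alpha$, $\mathcal S_\alpha=\bigcup_n\{s\in\mathcal S_{\beta_n^{(\alpha)}}: s\subseteq[n+1,\infty)\}$. $X_\alpha:=X_{\mathcal S_\alpha}$.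 *)

From mathcomp Require Import all_boot all_order all_algebra.
From mathcomp Require Import reals.
Set Implicit Arguments. Unset Strict Implicit. Unset Printing Implicit Defensive.
Import Order.TTheory GRing.Theory Num.Theory.

(* Countable ordinals as Brouwer trees; a limit node carries its       *)
(* fundamental sequence (beta_n)_n.                                     *)
Inductive ord : Type :=
| O0 : ord
| OS : ord -> ord
| OL : (nat -> ord) -> ord.

Inductive ole : ord -> ord -> Prop :=
| ole_zero y : ole O0 y
| ole_succ x y : olt x y -> ole (OS x) y
| ole_lim f y : (forall n, ole (f n) y) -> ole (OL f) y
with olt : ord -> ord -> Prop :=
| olt_succ x y : ole x y -> olt x (OS y)
| olt_lim x g n : olt x (g n) -> olt x (OL g).

Definition oeqv (a b : ord) : Prop := ole a b /\ ole b a.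

(* Well-formed notation: every fundamental sequence is strictly increasing
   (its supremum is then the limit ordinal denoted by the node). *)
Fixpoint owf (a : ord) : Prop :=
  match a with
  | O0 => True
  | OS b => owf b
  | OL f => (forall n, owf (f n)) /\ (forall n, olt (f n) (f n.+1))
  end.

Inductive occurs : ord -> ord -> Prop :=
| occ_refl a : occurs a a
| occ_S a b : occurs a b -> occurs a (OS b)
| occ_L a f n : occurs a (f n) -> occurs a (OL f).

(* Coherence: inside a, each ordinal has a single notation, i.e. the
   fundamental sequences are fixed once and for all (globally). *)
Definition coherent (a : ord) : Prop :=
  forall b c, occurs b a -> occurs c a -> oeqv b c -> b = c.

(* Finite subsets of N = {1,2,...}: strictly increasing lists of       *)
(* positive naturals.  min s = head 0 s, max s = last 0 s, #s = size s. *)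
Definition fsetN (s : seq nat) : Prop := sorted ltn s /\ all (fun k => 0 < k) s.

Definition family := seq nat -> Prop.

Definition schreier : family := fun s => fsetN s /\ size s <= head 0 s.

Definition blt (s t : seq nat) : bool := last 0 s < head 0 t.

Definition otimes (F G : family) : family := fun s =>
  exists bs : seq (seq nat),
    [/\ s = flatten bs,
        (forall b, b \in bs -> b <> [::] /\ F b),
        sorted blt bs &
        G (map (head 0) bs)].

Fixpoint Sch (a : ord) : family :=
  match a with
  | O0 => fun s => fsetN s /\ size s <= 1
  | OS b => otimes (Sch b) schreier
  | OL f => fun s => exists n, Sch (f n) s /\ all (fun k => n < k) s
  end.

(* The space X_F.  Vectors are x : nat -> R, coordinate k >= 1 being   *)
(* (x)_k (coordinate 0 is unused and forced to be 0).                   *)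
Section Space.
Variable R : realType.
Local Open Scope ring_scope.

Definition normFle (F : family) (x : nat -> R) (r : R) : Prop :=
  (forall k, (0 < k)%N -> `|x k| <= r) /\
  (forall s, F s -> \sum_(k <- s) `|x k| <= r).

(* x belongs to the completion of c00 under ||.||_F, realized as the
   closure of c00 in the sequences with the (extended) norm. *)
Definition inX (F : family) (x : nat -> R) : Prop :=
  x 0%N = 0 /\
  forall eps : R, 0 < eps ->
    exists (y : nat -> R) (N : nat),
      (forall k, (N <= k)%N -> y k = 0) /\
      normFle F (fun k => x k - y k) eps.

Definition cesaro (y : nat -> nat -> R) (N : nat) : nat -> R :=
  fun k => (N.+1%:R)^-1 * \sum_(i < N.+1) y i k.

Definition BanachSaks (F : family) (A : (nat -> R) -> Prop) : Prop :=
  forall y : nat -> nat -> R, (forall m, A (y m)) ->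
    exists phi : nat -> nat, (forall i, (phi i < phi i.+1)%N) /\
      exists z, inX F z /\
        forall eps : R, 0 < eps -> exists N0, forall N, (N0 <= N)%N ->
          normFle F (fun k => cesaro (fun i => y (phi i)) N k - z k) eps.
End Space.

From mathcomp Require Import all_boot all_order all_algebra.
From mathcomp Require Import reals.
From mathcomp Require Import ring lra zify.
From Stdlib Require Import Classical IndefiniteDescription.
Import Order.TTheory GRing.Theory Num.Theory.
Set Implicit Arguments. Unset Strict Implicit. Unset Printing Implicit Defensive.

(* Since beta < alpha, every S_(beta+1)-set lying far enough out belongs to S_alpha; in
   particular so do the blocks s_n and every union of L+1 consecutive blocks with indices > L.
   Pass to a subsequence such that (i) each vector is tiny on all later blocks (vectors of X_alpha
   have small tails on far-out S_alpha-sets) and (ii) all later vectors almost coincide on each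
   block (pigeonhole on the finitely many bounded coordinates of the block, diagonally); both
   properties survive further subsequences.  If the Cesaro means of a subsequence converged to z,
   then z would almost coincide with the late vectors on each block.  On the union T of the blocks
   with indices in (L, 2L+1], the (2L+2)-th Cesaro mean then stays about eps/2 away from z in
   l1(T), while z itself is small on T: this contradicts norm convergence. *)

Lemma olt_OS x y : olt x (OS y) -> ole x y.
Proof. by move=> H; inversion H. Qed.

Lemma olt_OL x g : olt x (OL g) -> exists n, olt x (g n).
Proof. by move=> H; inversion H; exists n. Qed.

Lemma olt_O0 x : ~ olt x O0.
Proof. by move=> H; inversion H. Qed.

Lemma ord_total a b : (ole a b \/ olt b a) /\ (ole b a \/ olt a b).
Proof.
elim: a b => [|a IHa|f IHf] b.
- split; first by left; constructor.
  elim: b => [|b _|g IHg]; first by left; constructor.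
  + by right; do 2!constructor.
  + have [[n Hn]|Hn] := classic (exists n, olt O0 (g n)); first by right; exact: olt_lim Hn.
    left; constructor => n; case: (IHg n) => // H; case: Hn; by exists n.
- split.
  + by case: (IHa b) => _ [H|H]; [right | left]; constructor.
  + elim: b => [|b _|g IHg]; first by left; constructor.
    * by case: (IHa b) => _ [H|H]; [left | right]; do 2!constructor.
    * have [[n Hn]|Hn] := classic (exists n, olt (OS a) (g n)); first by right; exact: olt_lim Hn.
      left; constructor => n; case: (IHg n) => // H; case: Hn; by exists n.
- split.
  + have [[n Hn]|Hn] := classic (exists n, ~ ole (f n) b).
    * by right; case: (IHf n b) => [[H|H] _] //; exact: olt_lim H.
    * left; constructor => n; apply: NNPP => H; apply: Hn; by exists n.
  + elim: b => [|b _|g IHg]; first by left; constructor.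
    * have [[n Hn]|Hn] := classic (exists n, olt b (f n)).
        by left; constructor; exact: olt_lim Hn.
      right; apply: olt_succ; apply: ole_lim => n.
      by case: (IHf n b) => [[H|H] _] //; case: Hn; exists n.
    * have [[n Hn]|Hn] := classic (exists n, olt (OL f) (g n)); first by right; exact: olt_lim Hn.
      left; constructor => n; case: (IHg n) => // H; case: Hn; by exists n.
Qed.

Lemma occurs_trans a b c : occurs a b -> occurs b c -> occurs a c.
Proof.
move=> Hab H; elim: H Hab => [//|d e _ IH|d g n _ IH] Hab.
  exact: occ_S (IH Hab).
exact: (@occ_L _ _ n) (IH Hab).
Qed.

Lemma fsetN_flatten bs :
  (forall b, b \in bs -> b != [::] /\ fsetN b) -> sorted blt bs -> fsetN (flatten bs).
Proof.
elim: bs => [|b bs IH] Hbs Hsort //=.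
have [Hb_ne [Hb_sorted Hb_pos]] := Hbs b (mem_head _ _).
have [IHsorted IHpos] : fsetN (flatten bs).
  by apply: IH; [move=> c Hc; apply: Hbs; rewrite inE Hc orbT | exact: path_sorted Hsort].
split; last by rewrite all_cat Hb_pos.
case: b Hb_ne Hb_sorted Hsort {Hbs Hb_pos} => [//|h b] _ /= Hb_sorted.
rewrite cat_path Hb_sorted /=.
case: bs IHsorted {IH IHpos} => [|c bs] //= IHsorted /andP[Hbc _].
case: c Hbc IHsorted => [|h' c] //=; rewrite /blt /= => -> //.
Qed.

Lemma fsetN_head_le s k : fsetN s -> k \in s -> head 0 s <= k.
Proof.
case: s => [//|h s] [/= Hs _]; rewrite inE => /orP[/eqP -> //|Hk].
by apply: ltnW; move/allP: (order_path_min ltn_trans Hs); apply.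
Qed.

Lemma fsetN_head_le_last s : fsetN s -> head 0 s <= last 0 s.
Proof. by case: s => [//|h s] Hs; apply: fsetN_head_le Hs (mem_last _ _). Qed.

Lemma Sch_fsetN b t : Sch b t -> fsetN t.
Proof.
elim: b t => [|b IH|g IH] t /=; first by case.
- case=> bs [-> Hbs Hsorted _]; apply: fsetN_flatten Hsorted => c Hc.
  by have [/eqP Hc_ne /IH] := Hbs c Hc.
- by case=> n [/IH].
Qed.

Lemma Sch_sub_succ b t : Sch b t -> Sch (OS b) t.
Proof.
case: t => [_|k t Ht]; first by exists [::].
have [_ /= /andP[Hk _]] := Sch_fsetN Ht.
exists [:: k :: t]; split; rewrite /= ?cats0 //.
- by move=> c; rewrite inE => /eqP ->.
- by rewrite /schreier /fsetN /= Hk.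
Qed.

Lemma Sch_succ_flatten b bs :
  (forall c, c \in bs -> c != [::] /\ Sch b c) -> sorted blt bs ->
  size bs <= head 0 (head [::] bs) -> Sch (OS b) (flatten bs).
Proof.
move=> Hbs Hsorted Hsize; exists bs; split => //.
- by move=> c /Hbs [/eqP].
have Hfs c : c \in bs -> fsetN c by move=> /Hbs [_ /Sch_fsetN].
split; last by rewrite size_map; case: bs Hsize {Hbs Hsorted Hfs}.
split.
- rewrite sorted_map; apply: (sub_in_sorted (P := fun c => head 0 c <= last 0 c)) Hsorted.
    by move=> c d Hc _; rewrite /blt /= => /(leq_ltn_trans Hc).
  by apply/allP => c /Hfs /fsetN_head_le_last.
- apply/allP => _ /mapP[c Hc ->]; have [_ Hpos] := Hfs c Hc.
  by case: c Hpos {Hc} (Hbs c Hc) => [_ [//]|h c] /= /andP[].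
Qed.

Lemma Sch_succ_tail alpha d b : coherent alpha -> occurs d alpha -> occurs b alpha ->
  olt b d -> exists N, forall t, Sch (OS b) t -> all (fun k => N < k) t -> Sch d t.
Proof.
move=> Hcoh; elim: d => [|d IH|g IH] Hd Hb Hlt.
- by case: (olt_O0 Hlt).
- have Hd' : occurs d alpha by apply: occurs_trans Hd; do 2!constructor.
  case: (ord_total d b) => [[Hdb|Hbd] _].
  + (* b <= d < b + 1, so coherence identifies the two notations *)
    have -> : b = d by apply: Hcoh => //; split => //; exact: olt_OS.
    by exists 0.
  + have [N HN] := IH Hd' Hb Hbd; exists N => t Ht Hfar.
    exact/Sch_sub_succ/HN.
- have [n Hn] := olt_OL Hlt.
  have Hgn : occurs (g n) alpha by apply: occurs_trans Hd; apply: (@occ_L _ _ n); constructor.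
  have [N HN] := IH n Hgn Hb Hn; exists (maxn N n) => t Ht Hfar; exists n.
  split; [apply: HN Ht _ | ]; apply: sub_all Hfar => k; apply: leq_ltn_trans;
    [exact: leq_maxl | exact: leq_maxr].
Qed.

Lemma increasing_lt (f : nat -> nat) : (forall i, f i < f i.+1) -> {homo f : m n / m < n}.
Proof. by move=> Hf; apply: homo_ltn ltn_trans Hf. Qed.

Lemma increasing_ge (f : nat -> nat) : (forall i, f i < f i.+1) -> forall i, i <= f i.
Proof. by move=> Hf; elim=> // i IH; apply: leq_ltn_trans IH (Hf i). Qed.

(* The L+1 blocks t (L+1), ..., t (2L+1); their union is admissible for the Schreier family
   since its minimum is at least L+1. *)
Definition window (t : nat -> seq nat) (L : nat) : seq nat :=
  flatten [seq t i | i <- iota L.+1 L.+1].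

Section BlockSequence.
Variables (b : ord) (s : nat -> seq nat).
Hypotheses (Hs : forall n, Sch b (s n)) (Hs_ne : forall n, s n != [::])
  (Hblock : forall n, last 0 (s n) < head 0 (s n.+1)).

Lemma block_head_lt m n : m < n -> head 0 (s m) < head 0 (s n).
Proof.
apply: (increasing_lt (f := fun i => head 0 (s i))) => i.
exact: leq_ltn_trans (fsetN_head_le_last (Sch_fsetN (Hs i))) (Hblock i).
Qed.

Lemma block_lt m n : m < n -> blt (s m) (s n).
Proof.
move=> Hmn; apply: leq_trans (Hblock m) _.
by move: Hmn; rewrite leq_eqVlt => /orP[/eqP -> //|/block_head_lt/ltnW].
Qed.

Lemma block_head_ge n : n <= head 0 (s n).
Proof. by apply: (increasing_ge (f := fun i => head 0 (s i))) => i; apply: block_head_lt. Qed.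

Lemma block_ge n k : k \in s n -> n <= k.
Proof. by move=> Hk; apply: leq_trans (block_head_ge n) (fsetN_head_le (Sch_fsetN (Hs n)) Hk). Qed.

Variable rho : nat -> nat.
Hypothesis Hrho : forall i, rho i < rho i.+1.

Lemma window_far L : all (fun k => L < k) (window (fun i => s (rho i)) L).
Proof.
apply/allP => k /flatten_mapP[i]; rewrite mem_iota => /andP[HLi _] /block_ge Hk.
exact: leq_trans HLi (leq_trans (increasing_ge Hrho i) Hk).
Qed.

Lemma window_Sch_succ L : Sch (OS b) (window (fun i => s (rho i)) L).
Proof.
apply: Sch_succ_flatten.
- by move=> c /mapP[i _ ->].
- rewrite sorted_map; apply: (sub_sorted _ (iota_ltn_sorted _ _)) => i j Hij.
  exact/block_lt/increasing_lt.
- by rewrite size_map size_iota /=; apply: leq_trans (increasing_ge Hrho _) (block_head_ge _).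
Qed.

End BlockSequence.

Definition unbounded (P : nat -> Prop) : Prop := forall n, exists2 m, n <= m & P m.

Lemma unbounded_gt P v : unbounded P -> unbounded (fun n => P n /\ v < n).
Proof.
move=> HP n; have [m Hm Pm] := HP (maxn n v.+1).
by exists m; [exact: leq_trans (leq_maxl _ _) Hm | split => //; exact: leq_trans (leq_maxr _ _) Hm].
Qed.

Lemma unbounded_fiber (f : nat -> nat) B P : unbounded P -> (forall n, P n -> f n <= B) ->
  exists b, unbounded (fun n => P n /\ f n = b).
Proof.
elim: B P => [|B IH] P HP Hf.
  exists 0 => n; have [m Hm Pm] := HP n; exists m => //; split => //.
  by apply/eqP; rewrite -leqn0 Hf.
have [HB|] := classic (unbounded (fun n => P n /\ f n = B.+1)); first by exists B.+1.
move=> /not_all_ex_not[n0 Hn0].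
have [|b Hb] := IH _ (unbounded_gt n0 HP).
  move=> n [Pn Hn]; rewrite -ltnS ltn_neqAle Hf // andbT.
  by apply/eqP => HfB; apply: Hn0; exists n; [exact: ltnW | split].
by exists b => n; have [m Hm [[Pm _] Hfm]] := Hb n; exists m.
Qed.

Lemma eventually_all (Q : nat -> nat -> Prop) p :
  (forall j, j <= p -> exists K, forall v, K <= v -> Q j v) ->
  exists K, forall v, K <= v -> forall j, j <= p -> Q j v.
Proof.
elim: p => [|p IH] HQ.
  have [K HK] := HQ 0 (leqnn 0); exists K => v Hv j; rewrite leqn0 => /eqP ->; exact: HK.
have [K1 HK1] := IH (fun j Hj => HQ j (leqW Hj)).
have [K2 HK2] := HQ p.+1 (leqnn _).
exists (maxn K1 K2) => v; rewrite geq_max => /andP[Hv1 Hv2] j.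
by rewrite leq_eqVlt ltnS => /orP[/eqP ->|Hj]; [exact: HK2 | exact: HK1].
Qed.

Lemma increasing_choice (Good : nat -> nat -> nat -> Prop) :
  (forall m p, exists2 v, p < v & Good m p v) ->
  exists rho : nat -> nat, (forall m, rho m < rho m.+1) /\ forall m, Good m (rho m) (rho m.+1).
Proof.
move=> Hstep.
have [next Hnext] : exists next : nat * nat -> nat,
    forall mp, mp.2 < next mp /\ Good mp.1 mp.2 (next mp).
  apply: (functional_choice (fun (mp : nat * nat) v => mp.2 < v /\ Good mp.1 mp.2 v)).
  by move=> [m p]; have [v ? ?] := Hstep m p; exists v.
pose fix rho m := if m is m'.+1 then next (m', rho m') else 0.
by exists rho; split => m; case: (Hnext (m, rho m)).
Qed.

Lemma unbounded_diagonal (Good : nat -> nat -> (nat -> Prop) -> Prop) :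
  (forall m P, unbounded P -> exists v P',
     [/\ P v, unbounded P', forall n, P' n -> P n /\ v < n & Good m v P']) ->
  exists (psi : nat -> nat) (Q : nat -> nat -> Prop),
    [/\ forall m, psi m < psi m.+1, forall m u, m < u -> Q m (psi u)
      & forall m, Good m (psi m) (Q m)].
Proof.
move=> Hstep.
pose Step (mP : nat * (nat -> Prop)) (vQ : nat * (nat -> Prop)) := unbounded mP.2 ->
  [/\ mP.2 vQ.1, unbounded vQ.2, forall n, vQ.2 n -> mP.2 n /\ vQ.1 < n & Good mP.1 vQ.1 vQ.2].
have [next Hnext] : exists next, forall mP, Step mP (next mP).
  apply: (functional_choice Step) => -[m P].
  have [HP|HP] := classic (unbounded P); last by exists (0, P).
  by have [v [Q HQ]] := Hstep m P HP; exists (v, Q).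
pose fix stage m := next (m, if m is m'.+1 then (stage m').2 else fun=> True).
pose P m := if m is m'.+1 then (stage m').2 else fun=> True.
have Hstage m : [/\ P m (stage m).1, unbounded (stage m).2,
    forall n, (stage m).2 n -> P m n /\ (stage m).1 < n & Good m (stage m).1 (stage m).2].
  elim: m => [|m [_ Hm _ _]]; apply: (Hnext (_, _)) => //.
  by move=> n; exists n.
have Qsub m m' n : m <= m' -> (stage m').2 n -> (stage m).2 n.
  elim: m' => [|m' IH]; first by rewrite leqn0 => /eqP ->.
  rewrite leq_eqVlt ltnS => /orP[/eqP -> //|/IH Hm Hn]; apply: Hm.
  by have [_ _ /(_ n Hn)[]] := Hstage m'.+1.
exists (fun m => (stage m).1), (fun m => (stage m).2); split => [m|m [//|u] Hmu|m].
- by have [_ _ Hlt _] := Hstage m; have [/Hlt[]] := Hstage m.+1.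
- by have [Hu _ _ _] := Hstage u.+1; exact: Qsub Hu.
- by have [] := Hstage m.
Qed.

Local Open Scope ring_scope.

Section RealSequences.
Variable R : realType.

Lemma inX_tail (F : seq nat -> Prop) (v : nat -> R) (d : R) : inX F v -> 0 < d ->
  exists K, forall t, F t -> all (fun k => (K <= k)%N) t -> \sum_(k <- t) `|v k| <= d.
Proof.
move=> [_ Hv] Hd; have [y [K [Hy [_ Hsum]]]] := Hv d Hd.
exists K => t Ht Hfar; rewrite (eq_big_seq (fun k => `|v k - y k|)) ?Hsum // => k Hk.
by rewrite Hy ?subr0 //; apply: (allP Hfar).
Qed.

Lemma inX_tail_blocks (F : seq nat -> Prop) (v : nat -> R) (s : nat -> seq nat) (N0 : nat) :
  inX F v -> (forall n, (N0 < n)%N -> F (s n)) -> (forall n k, k \in s n -> (n <= k)%N) ->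
  forall d, 0 < d -> exists K, forall n, (K <= n)%N -> \sum_(k <- s n) `|v k| <= d.
Proof.
move=> Hv HF Hfar d Hd; have [K HK] := inX_tail Hv Hd.
exists (maxn K N0.+1) => n; rewrite geq_max => /andP[HKn HNn].
by apply: HK (HF n HNn) _; apply/allP => k /Hfar; apply: leq_trans.
Qed.

Lemma unbounded_close (a : nat -> R) (M d : R) P : unbounded P -> 0 < d ->
  (forall n, `|a n| <= M) ->
  exists P', [/\ forall n, P' n -> P n, unbounded P'
    & forall u w, P' u -> P' w -> `|a u - a w| <= d].
Proof.
move=> HP Hd Ha.
have Hbucket n : 0 <= (a n + M) / d.
  by apply: divr_ge0 (ltW Hd); have := Ha n; rewrite ler_norml; lra.
pose f n := Num.truncn ((a n + M) / d).
have [|b Hb] := unbounded_fiber (f := f) (B := Num.truncn ((M + M) / d)) HP.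
  move=> n _; apply/le_truncn/ler_wpM2r; first by rewrite invr_ge0 ltW.
  by have := Ha n; rewrite ler_norml; lra.
exists (fun n => P n /\ f n = b); split => [n []//|//|u w [_ Hu] [_ Hw]].
have := truncn_itv (Hbucket u); have := truncn_itv (Hbucket w).
rewrite -/(f u) -/(f w) Hu Hw -!natr1 => /andP[Hw1 Hw2] /andP[Hu1 Hu2].
have -> : a u - a w = ((a u + M) / d - (a w + M) / d) * d by field; rewrite gt_eqF.
rewrite normrM (gtr0_norm Hd) -[leRHS]mul1r ler_wpM2r ?(ltW Hd) // ler_norml.
apply/andP; split; lra.
Qed.

Lemma unbounded_close_sum (S : seq nat) (x : nat -> nat -> R) (M : R) :
  (forall n k, k \in S -> `|x n k| <= M) -> forall d P, unbounded P -> 0 < d ->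
  exists P', [/\ forall n, P' n -> P n, unbounded P'
    & forall u w, P' u -> P' w -> \sum_(k <- S) `|x u k - x w k| <= d].
Proof.
elim: S => [|k S IH] Hx d P HP Hd.
  by exists P; split => // u w _ _; rewrite big_nil ltW.
have Hd2 : 0 < d / 2 by rewrite divr_gt0.
have [P1 [HP1P HP1 Hk]] :=
  unbounded_close (a := fun n => x n k) HP Hd2 (fun n => Hx n k (mem_head _ _)).
have [|P2 [HP2P HP2 HS]] := IH _ (d / 2) P1 HP1 Hd2.
  by move=> n j Hj; apply: Hx; rewrite inE Hj orbT.
exists P2; split => [n /HP2P /HP1P //|//|u w Hu Hw].
rewrite big_cons (splitr d); apply: lerD; last exact: HS.
by apply: Hk; apply: HP2P.
Qed.

(* The weight i+1 makes both properties hereditary under subsequences, and on a window with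
   indices > L the interaction of one block with the other 2L+1 vectors is then O(e). *)
Definition past_small (y : nat -> nat -> R) (t : nat -> seq nat) (e : R) : Prop :=
  forall j i, (j < i)%N -> i.+1%:R * \sum_(k <- t i) `|y j k| <= e.

Definition future_close (y : nat -> nat -> R) (t : nat -> seq nat) (e : R) : Prop :=
  forall i u w, (i < u)%N -> (i < w)%N -> i.+1%:R * \sum_(k <- t i) `|y u k - y w k| <= e.

Lemma weight_le (i j : nat) (S e : R) : (i <= j)%N -> 0 <= S ->
  j.+1%:R * S <= e -> i.+1%:R * S <= e.
Proof. by move=> Hij HS; apply/le_trans/ler_wpM2r; rewrite // ler_nat. Qed.

Section Subsequence.
Variables (y : nat -> nat -> R) (t : nat -> seq nat) (e : R) (phi : nat -> nat).
Hypothesis Hphi : forall i, (phi i < phi i.+1)%N.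

Lemma past_small_subseq : past_small y t e ->
  past_small (fun i => y (phi i)) (fun i => t (phi i)) e.
Proof.
move=> Hy j i Hji; apply: (weight_le (increasing_ge Hphi i)); first exact: sumr_ge0.
exact/Hy/increasing_lt.
Qed.

Lemma future_close_subseq : future_close y t e ->
  future_close (fun i => y (phi i)) (fun i => t (phi i)) e.
Proof.
move=> Hy i u w Hiu Hiw; apply: (weight_le (increasing_ge Hphi i)); first exact: sumr_ge0.
by apply: Hy; apply: increasing_lt.
Qed.

End Subsequence.

Section Construction.
Variables (x : nat -> nat -> R) (s : nat -> seq nat) (e : R).
Hypothesis He : 0 < e.

Lemma future_close_subsequence (M : R) : (forall n v k, k \in s v -> `|x n k| <= M) ->
  exists2 psi : nat -> nat, (forall m, (psi m < psi m.+1)%N) &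
    future_close (fun m => x (psi m)) (fun m => s (psi m)) e.
Proof.
move=> Hx.
pose Good m v (Q : nat -> Prop) := forall u w, Q u -> Q w ->
  m.+1%:R * \sum_(k <- s v) `|x u k - x w k| <= e.
have [|psi [Q [Hpsi HQ HGood]]] := unbounded_diagonal (Good := Good).
  move=> m P HP; have [v _ Pv] := HP 0%N.
  have Hd : 0 < e / m.+1%:R by rewrite divr_gt0 ?ltr0n.
  have [Q [HQP HQ Hclose]] := unbounded_close_sum (Hx^~ v) (unbounded_gt v HP) Hd.
  exists v, Q; split => // u w Hu Hw.
  by rewrite -ler_pdivlMl ?ltr0n // mulrC Hclose.
by exists psi => // i u w Hiu Hiw; apply: HGood; apply: HQ.
Qed.

Lemma past_small_subsequence :
  (forall n d, 0 < d -> exists K, forall v, (K <= v)%N -> \sum_(k <- s v) `|x n k| <= d) ->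
  exists2 rho : nat -> nat, (forall m, (rho m < rho m.+1)%N) &
    past_small (fun m => x (rho m)) (fun m => s (rho m)) e.
Proof.
move=> Htail.
pose Good m p v := forall j, (j <= p)%N -> m.+2%:R * \sum_(k <- s v) `|x j k| <= e.
have [|rho [Hrho HGood]] := increasing_choice (Good := Good).
  move=> m p; have Hd : 0 < e / m.+2%:R by rewrite divr_gt0 ?ltr0n.
  have [K HK] := @eventually_all (fun j v => \sum_(k <- s v) `|x j k| <= e / m.+2%:R) p
    (fun j _ => Htail j _ Hd).
  exists (maxn K p.+1); first by rewrite leq_max ltnSn orbT.
  by move=> j Hj; rewrite -ler_pdivlMl ?ltr0n // mulrC HK ?leq_maxl.
exists rho => // j [//|i] Hji; apply: HGood.
by move: Hji; rewrite ltnS leq_eqVlt => /orP[/eqP -> //|/(increasing_lt Hrho)/ltnW].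
Qed.

End Construction.

Lemma separated_subsequence (x : nat -> nat -> R) (s : nat -> seq nat) (M e : R) : 0 < e ->
  (forall n v k, k \in s v -> `|x n k| <= M) ->
  (forall n d, 0 < d -> exists K, forall v, (K <= v)%N -> \sum_(k <- s v) `|x n k| <= d) ->
  exists2 psi : nat -> nat, (forall m, (psi m < psi m.+1)%N) &
    past_small (fun m => x (psi m)) (fun m => s (psi m)) e /\
    future_close (fun m => x (psi m)) (fun m => s (psi m)) e.
Proof.
move=> He Hx Htail.
have [psi Hpsi Hclose] := future_close_subsequence He Hx.
have [|rho Hrho Hsmall] :=
  past_small_subsequence (x := fun n => x (psi n)) (s := fun v => s (psi v)) He.
  move=> n d Hd; have [K HK] := Htail (psi n) d Hd.
  by exists K => v Hv; apply/HK/(leq_trans Hv)/increasing_ge.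
exists (fun m => psi (rho m)) => [m|]; first exact/increasing_lt/Hrho.
by split => //; apply: future_close_subseq Hclose.
Qed.

Lemma cesaro_subr (y : nat -> nat -> R) (c : R) N k :
  cesaro y N k - c = N.+1%:R^-1 * \sum_(i < N.+1) (y i k - c).
Proof.
rewrite /cesaro sumrB sumr_const card_ord -[c *+ _]mulr_natl.
by field; rewrite addrC natr1 pnatr_eq0.
Qed.

Lemma cesaro_sum_dist (S : seq nat) (y : nat -> nat -> R) (a : nat -> R) N :
  \sum_(k <- S) `|cesaro y N k - a k| <=
    N.+1%:R^-1 * \sum_(i < N.+1) \sum_(k <- S) `|y i k - a k|.
Proof.
have HN : 0 < N.+1%:R :> R by rewrite ltr0n.
rewrite exchange_big mulr_sumr /=; apply: ler_sum => k _.
rewrite cesaro_subr normrM gtr0_norm ?invr_gt0 //; apply/ler_wpM2l/ler_norm_sum.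
by rewrite invr_ge0 ltW.
Qed.

Lemma cesaro_limit_close (S : seq nat) (y : nat -> nat -> R) (a z : nat -> R) (m : nat)
    (B r : R) :
  (forall l, \sum_(k <- S) `|y l k - a k| <= B) ->
  (forall l, (m <= l)%N -> \sum_(k <- S) `|y l k - a k| <= r) ->
  (forall d, 0 < d -> exists N0, forall N, (N0 <= N)%N ->
     \sum_(k <- S) `|cesaro y N k - z k| <= d) ->
  \sum_(k <- S) `|z k - a k| <= r.
Proof.
move=> HB Hr Hcvg; have B_ge0 : 0 <= B := le_trans (sumr_ge0 _ (fun _ _ => normr_ge0 _)) (HB 0%N).
have r_ge0 : 0 <= r := le_trans (sumr_ge0 _ (fun _ _ => normr_ge0 _)) (Hr m (leqnn m)).
(* the first m terms shift the N-th Cesaro mean by at most m B / (N+1) *)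
apply/ler_addgt0Pr => d Hd; have Hd2 : 0 < d / 2 by rewrite divr_gt0.
have [N0 HN0] := Hcvg _ Hd2.
set q := m%:R * B / (d / 2).
have q_ge0 : 0 <= q by apply: divr_ge0 (ltW Hd2); exact: mulr_ge0 (ler0n _ _) B_ge0.
pose N := (N0 + m + Num.truncn q)%N.
have [HmN HN] : (m <= N.+1)%N /\ q < N.+1%:R.
  split; first by rewrite /N; lia.
  have /andP[_ Hq] := truncn_itv q_ge0; apply: lt_le_trans Hq _.
  by rewrite ler_nat /N; lia.
have Hsum : \sum_(i < N.+1) \sum_(k <- S) `|y i k - a k| <= m%:R * B + N.+1%:R * r.
  rewrite -(big_mkord xpredT (fun i => \sum_(k <- S) `|y i k - a k|)).
  rewrite (@big_cat_nat _ _ _ m) //= lerD //.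
    by apply: le_trans (ler_sum _ (fun i _ => HB i)) _; rewrite sumr_const_nat subn0 mulr_natl.
  apply: le_trans (ler_sum_nat (G := fun=> r) _) _ => [i /andP[Hi _]|]; first exact: Hr.
  by rewrite sumr_const_nat -[r *+ _]mulr_natl ler_wpM2r // ler_nat leq_subr.
have Hcz : \sum_(k <- S) `|cesaro y N k - z k| <= d / 2 by apply: HN0; rewrite /N; lia.
have Hca : \sum_(k <- S) `|cesaro y N k - a k| <= d / 2 + r.
  apply: le_trans (cesaro_sum_dist S y a N) _; rewrite ler_pdivrMl ?ltr0n // mulrDr.
  apply: le_trans Hsum _; rewrite lerD2r.
  by move: HN; rewrite /q ltr_pdivrMr // mulrC => /ltW.
have Htri : \sum_(k <- S) `|z k - a k| <=
    \sum_(k <- S) `|cesaro y N k - z k| + \sum_(k <- S) `|cesaro y N k - a k|.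
  by rewrite -big_split; apply: ler_sum => k _; rewrite (distrC (cesaro _ _ _)) ler_distD.
lra.
Qed.

Lemma future_close_cesaro (F : seq nat -> Prop) (y : nat -> nat -> R) (t : nat -> seq nat)
    (z : nat -> R) (e M : R) (i : nat) :
  future_close y t e -> F (t i) -> (forall l u, F u -> \sum_(k <- u) `|y l k| <= M) ->
  (forall d, 0 < d -> exists N0, forall N, (N0 <= N)%N ->
     normFle F (fun k => cesaro y N k - z k) d) ->
  forall j, (i < j)%N -> i.+1%:R * \sum_(k <- t i) `|y j k - z k| <= e.
Proof.
move=> Hclose Hti HM Hcvg j Hij.
rewrite -ler_pdivlMl ?ltr0n // (eq_bigr (fun k => `|z k - y j k|)) => [|k _]; last exact: distrC.
apply: (cesaro_limit_close (m := i.+1) (B := M + M)) => [l|l Hl|d Hd].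
- apply: le_trans (ler_sum _ (fun k _ => ler_normB _ _)) _.
  by rewrite big_split; apply: lerD; apply: HM.
- by rewrite ler_pdivlMl ?ltr0n //; apply: Hclose.
- by have [N0 HN0] := Hcvg d Hd; exists N0 => N /HN0[_]; apply.
Qed.

Lemma norm_sum_ge (n : nat) (i : 'I_n) (v : 'I_n -> R) :
  `|v i| - \sum_(j < n | j != i) `|v j| <= `|\sum_(j < n) v j|.
Proof.
rewrite [X in _ <= `|X|](bigD1 i) //=; apply: le_trans _ (lerB_normD _ _).
by rewrite lerD2l lerN2 ler_norm_sum.
Qed.

Lemma cesaro_scaled_dist (y : nat -> nat -> R) (z : nat -> R) N k :
  N.+1%:R * `|cesaro y N k - z k| = `|\sum_(j < N.+1) (y j k - z k)|.
Proof.
rewrite -[N.+1%:R]ger0_norm // -normrM cesaro_subr mulrA mulfV ?mul1r //.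
by rewrite pnatr_eq0.
Qed.

Lemma block_lower_bound (n i : nat) (S : seq nat) (y : nat -> nat -> R) (z : nat -> R)
    (eps d : R) :
  (i < n)%N -> eps <= \sum_(k <- S) `|y i k| ->
  (forall j, (j < i)%N -> \sum_(k <- S) `|y j k| <= d) ->
  (forall j, (i < j)%N -> \sum_(k <- S) `|y j k - z k| <= d) ->
  eps - n%:R * \sum_(k <- S) `|z k| - n.-1%:R * d <=
    \sum_(k <- S) `|\sum_(j < n) (y j k - z k)|.
Proof.
move=> Hin Hi Hbefore Hafter; pose io := Ordinal Hin.
have Hcoord : \sum_(k <- S) `|y i k - z k| - \sum_(j < n | j != io) \sum_(k <- S) `|y j k - z k|
    <= \sum_(k <- S) `|\sum_(j < n) (y j k - z k)|.
  rewrite exchange_big -sumrB; apply: ler_sum => k _.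
  exact: (norm_sum_ge io (fun j : 'I_n => y j k - z k)).
have Hyi : \sum_(k <- S) `|y i k| - \sum_(k <- S) `|z k| <= \sum_(k <- S) `|y i k - z k|.
  by rewrite -sumrB; apply: ler_sum => k _; apply: lerB_dist.
have Hothers : \sum_(j < n | j != io) \sum_(k <- S) `|y j k - z k| <=
    n.-1%:R * (d + \sum_(k <- S) `|z k|).
  have -> : n.-1%:R * (d + \sum_(k <- S) `|z k|) =
      \sum_(j < n | j != io) (d + \sum_(k <- S) `|z k|).
    by rewrite sumr_const cardC1 card_ord mulr_natl.
  apply: ler_sum => j Hj.
  case: (ltngtP j i) Hj => [/Hbefore Hj _|/Hafter Hj _|Eji /eqP[]]; last exact: val_inj.
    apply: le_trans (ler_sum _ (fun k _ => ler_normB _ _)) _.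
    by rewrite big_split lerD2r.
  by apply: le_trans Hj _; rewrite lerDl; apply: sumr_ge0.
have -> : n%:R = n.-1%:R + 1 :> R by rewrite natr1 prednK // (leq_ltn_trans _ Hin).
lra.
Qed.

Lemma window_lower_bound (y : nat -> nat -> R) (t : nat -> seq nat) (z : nat -> R) (eps e : R) L :
  0 <= e -> (forall i, eps <= \sum_(k <- t i) `|y i k|) -> past_small y t e ->
  (forall i j, (L < i)%N -> (i < j)%N -> i.+1%:R * \sum_(k <- t i) `|y j k - z k| <= e) ->
  eps <= 2 * (e + \sum_(k <- window t L) `|z k| +
                  \sum_(k <- window t L) `|cesaro y (L.*2).+1 k - z k|).
Proof.
move=> He Hy Hsmall Hclose; set N := (L.*2).+1.
have Hblock i : (L < i < N.+1)%N -> eps - 2 * e - N.+1%:R * \sum_(k <- t i) `|z k| <=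
    N.+1%:R * \sum_(k <- t i) `|cesaro y N k - z k|.
  move=> /andP[HLi HiN]; have Hi : 0 < i.+1%:R :> R by rewrite ltr0n.
  rewrite [leRHS]mulr_sumr (eq_bigr _ (fun k _ => cesaro_scaled_dist y z N k)).
  apply: le_trans (block_lower_bound (d := e / i.+1%:R) HiN (Hy i) _ _) => [|j Hj|j Hj].
  - have HNi : N%:R <= 2 * i.+1%:R :> R.
      by rewrite -[2]/(2%:R) -natrM ler_nat /N -addnn; lia.
    have : N%:R * (e / i.+1%:R) <= 2 * e by rewrite mulrA ler_pdivrMr //; nra.
    by rewrite succnK -!addrA lerD2l addrC lerD2l lerN2.
  - by rewrite ler_pdivlMr // mulrC; apply: Hsmall.
  - by rewrite ler_pdivlMr // mulrC; apply: Hclose.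
have := ler_sum_nat Hblock.
have Hwin : (N.+1 - L.+1 = L.+1)%N by rewrite /N -addnn; lia.
have Hw (f : nat -> R) : \sum_(k <- window t L) f k = \sum_(L.+1 <= i < N.+1) \sum_(k <- t i) f k.
  by rewrite /window big_flatten big_map /index_iota Hwin.
rewrite sumrB sumr_const_nat Hwin -!mulr_sumr -[_ *+ L.+1]mulr_natl.
rewrite -(Hw (fun k => `|z k|)) -(Hw (fun k => `|cesaro y N k - z k|)).
have -> : N.+1%:R = 2 * L.+1%:R :> R by rewrite -[2]/(2%:R) -natrM /N -addnn; congr _%:R; lia.
have HL : 0 < L.+1%:R :> R by rewrite ltr0n.
nra.
Qed.

Lemma no_cesaro_limit (F : seq nat -> Prop) (y : nat -> nat -> R) (t : nat -> seq nat)
    (z : nat -> R) (eps M : R) (N0 : nat) :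
  0 < eps -> (forall i, eps <= \sum_(k <- t i) `|y i k|) ->
  past_small y t (eps / 8) -> future_close y t (eps / 8) ->
  (forall l u, F u -> \sum_(k <- u) `|y l k| <= M) ->
  (forall i, (N0 < i)%N -> F (t i)) -> (forall L, (N0 <= L)%N -> F (window t L)) ->
  (forall L, all (fun k => L < k)%N (window t L)) -> inX F z ->
  ~ (forall d, 0 < d -> exists N1, forall N, (N1 <= N)%N ->
       normFle F (fun k => cesaro y N k - z k) d).
Proof.
move=> Heps Hy Hsmall Hclose HM Ht Hwin Hfar Hz Hcvg.
have He : 0 < eps / 8 by rewrite divr_gt0.
have [Kz HKz] := inX_tail Hz He.
have [Nc HNc] := Hcvg _ He.
pose L := (N0 + Kz + Nc)%N.
have Hclose_z i j : (L < i)%N -> (i < j)%N ->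
    i.+1%:R * \sum_(k <- t i) `|y j k - z k| <= eps / 8.
  move=> HLi; apply: (future_close_cesaro Hclose _ HM Hcvg); apply: Ht; rewrite /L; lia.
have HwinL : F (window t L) by apply: Hwin; rewrite /L; lia.
have Hz_win : \sum_(k <- window t L) `|z k| <= eps / 8.
  by apply: HKz HwinL _; apply: sub_all (Hfar L) => k; rewrite /L; lia.
have [|_ Hc_win] := HNc (L.*2).+1; first by rewrite -addnn /L; lia.
have := Hc_win _ HwinL; have := window_lower_bound (ltW He) Hy Hsmall Hclose_z.
lra.
Qed.

End RealSequences.

Unset Implicit Arguments.

Theorem proposition3p8 (R : realType) (alpha : ord)
  (Hwf : owf alpha) (Hcoh : coherent alpha)
  (x : nat -> nat -> R)
  (HX : forall n, inX (Sch alpha) (x n))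
  (Hbdd : exists M : R, forall n, normFle (Sch alpha) (x n) M)
  (eps : R) (Heps : 0 < eps)
  (beta : ord) (Hbeta_occ : occurs beta alpha) (Hbeta_lt : olt beta alpha)
  (s : nat -> seq nat)
  (HsS : forall n, Sch beta (s n))
  (Hblock : forall n, (last 0%N (s n) < head 0%N (s n.+1))%N)
  (Hsum : forall n, eps <= \sum_(k <- s n) `|x n k|) :
  ~ BanachSaks (Sch alpha) (fun w => exists n, w = x n).
Proof.
move=> HBS; have [M HM] := Hbdd.
have Hs_ne n : s n != [::] by apply/eqP => Hn; have := Hsum n; rewrite Hn big_nil; lra.
have [Nk HNk] := Sch_succ_tail Hcoh (occ_refl alpha) Hbeta_occ Hbeta_lt.
have Hs_alpha n : (Nk < n)%N -> Sch alpha (s n).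
  move=> Hn; apply: HNk (Sch_sub_succ (HsS n)) _; apply/allP => k /(block_ge HsS Hblock).
  exact: leq_trans Hn.
have Htail n := inX_tail_blocks (HX n) Hs_alpha (block_ge HsS Hblock).
have Hcoord n v k : k \in s v -> `|x n k| <= M.
  by move=> Hk; apply: (HM n).1; have [_ /allP] := Sch_fsetN (HsS v); apply.
have He : 0 < eps / 8 by rewrite divr_gt0.
have [psi Hpsi [Hsmall Hclose]] := separated_subsequence He Hcoord Htail.
have [phi [Hphi [z [Hz Hcvg]]]] := HBS (fun m => x (psi m)) (fun m => ex_intro _ (psi m) erefl).
have Hrho i : (psi (phi i) < psi (phi i.+1))%N by apply/increasing_lt/Hphi.
apply: (no_cesaro_limit (N0 := Nk) Heps _ (past_small_subseq Hphi Hsmall)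
  (future_close_subseq Hphi Hclose) _ _ _ _ Hz Hcvg) => [i|l u Hu|i Hi|L HL|L].
- exact: Hsum.
- exact: (HM _).2.
- by apply: Hs_alpha; apply: leq_trans Hi (increasing_ge Hrho i).
- apply: HNk (window_Sch_succ HsS Hs_ne Hblock Hrho L) _.
  by apply: sub_all (window_far HsS Hblock Hrho L) => k; apply: leq_ltn_trans.
- exact: (window_far HsS Hblock (rho := fun i => psi (phi i)) Hrho L).
Qed.
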